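(* Let $F(z)=\sum_{k=0}^\infty b_k z^k\in\mathcal{B}$ and $0\le r\le 1/\sqrt3$. Then \[ \sum_{k=2}^\infty k|b_k|^2r^{2k}\le \frac{27}{8}r^4. \]
   Context: $\mathbb{D}$ denotes the open unit disc. $\mathcal{B}$ is the class of functions $F$ analytic in $\mathbb{D}$ satisfying $|F'(z)|\le \frac{1}{1-|z|^2}$ for all $z\in\mathbb{D}$. For $F\in\mathcal{B}$ we write its Taylor expansion as $F(z)=\sum_{k=0}^\infty b_k z^k$. *)

From Stdlib Require Import Reals Lra Lia Arith.
Open Scope R_scope.

Definition Cplx : Type := (R * R)%type.
Definition Re (z : Cplx) : R := fst z.
Definition Im (z : Cplx) : R := snd z.
Definition C0 : Cplx := (0, 0).
Definition C1 : Cplx := (1, 0).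
Definition Cmul (z w : Cplx) : Cplx :=
  (Re z * Re w - Im z * Im w, Re z * Im w + Im z * Re w).
Definition Cscale (a : R) (z : Cplx) : Cplx := (a * Re z, a * Im z).
Fixpoint Cpow (z : Cplx) (n : nat) : Cplx :=
  match n with O => C1 | S m => Cmul z (Cpow z m) end.
Definition Cnorm (z : Cplx) : R := sqrt (Re z ^ 2 + Im z ^ 2).

Definition Cseries_cv (u : nat -> Cplx) (l : Cplx) : Prop :=
  Un_cv (fun N => sum_f_R0 (fun k => Re (u k)) N) (Re l) /\
  Un_cv (fun N => sum_f_R0 (fun k => Im (u k)) N) (Im l).

(* F(z) = sum b_k z^k is analytic in the unit disc (its Taylor series converges
   on D), and F'(z) = sum_{k>=0} (k+1) b_{k+1} z^k satisfies
   |F'(z)| <= 1/(1-|z|^2) for all |z| < 1. *)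
Definition in_B (b : nat -> Cplx) : Prop :=
  (forall z : Cplx, Cnorm z < 1 ->
     exists w : Cplx, Cseries_cv (fun k => Cmul (b k) (Cpow z k)) w) /\
  (forall z : Cplx, Cnorm z < 1 ->
     exists w : Cplx,
       Cseries_cv (fun k => Cscale (INR (S k)) (Cmul (b (S k)) (Cpow z k))) w /\
       Cnorm w <= 1 / (1 - Cnorm z ^ 2)).

From Pilot Require Import Defs.
From Stdlib Require Import Reals Lra Lia Arith.
Open Scope R_scope.

(* For 0 < rho < 1 the coefficients a_k = (k+1) b_(k+1) of F' satisfy the Parseval-type
   bound sum_k |a_k|^2 rho^(2k) <= (1/(1-rho^2))^2, because |F'| <= 1/(1-rho^2) on the
   circle |z| = rho.  Parseval is used in its discrete form: at the (m+1)-st roots of unity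
   scaled by rho, the mean square of the polynomial sum_(k<=m) a_k z^k is
   sum_(k<=m) |a_k|^2 rho^(2k), and this polynomial differs from F' by a geometrically small
   tail, since the series of F' also converges at a radius s > rho.  For rho = 1/sqrt 3 this
   gives sum_k (k+1)^2 |b_(k+1)|^2 3^(-k) <= 9/4, and for r^2 <= 1/3 and k >= 2 the term
   k |b_k|^2 r^(2k) is at most 3/2 r^4 times k^2 |b_k|^2 3^(-(k-1)). *)

Lemma sum_f_R0_scal_l c (f : nat -> R) n : sum_f_R0 (fun i => c * f i) n = c * sum_f_R0 f n.
Proof. rewrite scal_sum. apply sum_eq; intros; ring. Qed.

Lemma sum_f_R0_swap (F : nat -> nat -> R) m n :
  sum_f_R0 (fun j => sum_f_R0 (F j) n) m = sum_f_R0 (fun k => sum_f_R0 (fun j => F j k) m) n.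
Proof.
  induction m as [|m IH]; simpl; [reflexivity|].
  now rewrite IH, <- plus_sum.
Qed.

Lemma sum_f_R0_delta (c : nat -> R) k n : (k <= n)%nat ->
  sum_f_R0 (fun l => if Nat.eqb k l then c l else 0) n = c k.
Proof.
  induction n as [|n IH]; intros Hk; simpl.
  - now replace k with 0%nat by lia.
  - destruct (Nat.eqb_spec k (S n)) as [->|Hne].
    + rewrite sum_eq_R0; [ring|]. intros l Hl.
      destruct (Nat.eqb_spec (S n) l); [lia|reflexivity].
    + rewrite IH by lia. ring.
Qed.

Lemma sum_f_R0_sqr (f : nat -> R) n :
  sum_f_R0 f n ^ 2 = sum_f_R0 (fun k => sum_f_R0 (fun l => f k * f l) n) n.
Proof.
  rewrite <- Rsqr_pow2; unfold Rsqr. rewrite scal_sum.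
  apply sum_eq; intros k _. rewrite scal_sum.
  apply sum_eq; intros l _. ring.
Qed.

Lemma sum_cos_telescope a n :
  2 * sin (a / 2) * sum_f_R0 (fun j => cos (INR j * a)) n
  = sin (INR (S n) * a - a / 2) + sin (a / 2).
Proof.
  induction n as [|n IH].
  - simpl. rewrite Rmult_0_l, cos_0. replace (1 * a - a / 2) with (a / 2) by field. ring.
  - rewrite tech5, Rmult_plus_distr_l, IH.
    replace (INR (S (S n)) * a - a / 2) with (INR (S n) * a + a / 2)
      by (rewrite (S_INR (S n)); field).
    rewrite sin_minus, sin_plus. ring.
Qed.

Lemma sum_sin_telescope a n :
  2 * sin (a / 2) * sum_f_R0 (fun j => sin (INR j * a)) n
  = cos (a / 2) - cos (INR (S n) * a - a / 2).
Proof.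
  induction n as [|n IH].
  - simpl. rewrite Rmult_0_l, sin_0. replace (1 * a - a / 2) with (a / 2) by field. ring.
  - rewrite tech5, Rmult_plus_distr_l, IH.
    replace (INR (S (S n)) * a - a / 2) with (INR (S n) * a + a / 2)
      by (rewrite (S_INR (S n)); field).
    rewrite cos_minus, cos_plus. ring.
Qed.

Lemma sum_cos_sin_vanish a n :
  sin (a / 2) <> 0 -> sin (INR (S n) * a / 2) = 0 ->
  sum_f_R0 (fun j => cos (INR j * a)) n = 0 /\ sum_f_R0 (fun j => sin (INR j * a)) n = 0.
Proof.
  intros Ha Hna.
  assert (Hsin : sin (INR (S n) * a) = 0).
  { replace (INR (S n) * a) with (2 * (INR (S n) * a / 2)) by field.
    rewrite sin_2a, Hna. ring. }
  assert (Hcos : cos (INR (S n) * a) = 1).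
  { replace (INR (S n) * a) with (2 * (INR (S n) * a / 2)) by field.
    rewrite cos_2a_sin, Hna. ring. }
  pose proof (sum_cos_telescope a n) as Ec. pose proof (sum_sin_telescope a n) as Es.
  rewrite sin_minus, Hsin, Hcos in Ec. rewrite cos_minus, Hsin, Hcos in Es.
  assert (H2a : 2 * sin (a / 2) <> 0) by (intros H; apply Ha; lra).
  split; apply (Rmult_eq_reg_l (2 * sin (a / 2))); auto; [rewrite Ec | rewrite Es]; ring.
Qed.

Lemma roots_of_unity_orthogonal m k l : (k <= m)%nat -> (l <= m)%nat -> k <> l ->
  let a := (INR k - INR l) * (2 * PI / INR (S m)) in
  sum_f_R0 (fun j => cos (INR j * a)) m = 0 /\ sum_f_R0 (fun j => sin (INR j * a)) m = 0.
Proof.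
  intros Hk Hl Hkl a.
  assert (HM : 0 < INR (S m)) by apply lt_0_INR, Nat.lt_0_succ.
  pose proof PI_RGT_0.
  apply sum_cos_sin_vanish.
  - (* a / 2 = (k - l) PI / (m + 1) with 0 < |k - l| <= m *)
    intros Hs. apply sin_eq_0_0 in Hs as [z Hz].
    assert (E : INR k - INR l = IZR z * INR (S m)).
    { transitivity (a / 2 * (INR (S m) / PI)); [unfold a; field; lra|].
      rewrite Hz. field. lra. }
    rewrite !INR_IZR_INZ, <- minus_IZR, <- mult_IZR in E. apply eq_IZR in E.
    destruct (Z.lt_trichotomy z 0) as [Hz0|[->|Hz0]]; nia.
  - apply sin_eq_0_1. exists (Z.of_nat k - Z.of_nat l)%Z.
    rewrite minus_IZR, <- !INR_IZR_INZ. unfold a. field. lra.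
Qed.

Lemma roots_of_unity_sums m k l : (k <= m)%nat -> (l <= m)%nat ->
  let t j := INR j * (2 * PI / INR (S m)) in
  sum_f_R0 (fun j => cos ((INR k - INR l) * t j)) m = (if Nat.eqb k l then INR (S m) else 0)
  /\ sum_f_R0 (fun j => sin ((INR k - INR l) * t j)) m = 0.
Proof.
  intros Hk Hl t.
  destruct (Nat.eqb_spec k l) as [<-|Hkl].
  - rewrite Rminus_diag. split.
    + rewrite (sum_eq _ (fun _ => 1)), sum_cte; [ring|].
      intros; cbv beta. now rewrite Rmult_0_l, cos_0.
    + apply sum_eq_R0. intros; cbv beta. now rewrite Rmult_0_l, sin_0.
  - destruct (roots_of_unity_orthogonal m k l Hk Hl Hkl) as [Hc Hs].
    split; [rewrite <- Hc | rewrite <- Hs]; apply sum_eq; intros j _; unfold t; f_equal; ring.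
Qed.

(* Real and imaginary parts of [sum_{k <= n} (u k + i v k) e^{ikt}]. *)
Definition trig_re (u v : nat -> R) n t :=
  sum_f_R0 (fun k => u k * cos (INR k * t) - v k * sin (INR k * t)) n.
Definition trig_im (u v : nat -> R) n t :=
  sum_f_R0 (fun k => u k * sin (INR k * t) + v k * cos (INR k * t)) n.

Lemma trig_norm_sq u v n t :
  trig_re u v n t ^ 2 + trig_im u v n t ^ 2
  = sum_f_R0 (fun k => sum_f_R0 (fun l =>
        (u k * u l + v k * v l) * cos ((INR k - INR l) * t)
      + (u k * v l - v k * u l) * sin ((INR k - INR l) * t)) n) n.
Proof.
  unfold trig_re, trig_im. rewrite !sum_f_R0_sqr, <- plus_sum.
  apply sum_eq; intros k _. rewrite <- plus_sum.
  apply sum_eq; intros l _.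
  replace ((INR k - INR l) * t) with (INR k * t - INR l * t) by ring.
  rewrite cos_minus, sin_minus. ring.
Qed.

Lemma discrete_parseval u v m :
  sum_f_R0 (fun j => trig_re u v m (INR j * (2 * PI / INR (S m))) ^ 2
                   + trig_im u v m (INR j * (2 * PI / INR (S m))) ^ 2) m
  = INR (S m) * sum_f_R0 (fun k => u k ^ 2 + v k ^ 2) m.
Proof.
  rewrite (sum_eq _ _ _ (fun j _ => trig_norm_sq u v m _)), sum_f_R0_swap.
  rewrite <- sum_f_R0_scal_l.
  apply sum_eq; intros k Hk. rewrite sum_f_R0_swap.
  rewrite <- (sum_f_R0_delta (fun l => INR (S m) * (u l ^ 2 + v l ^ 2)) k m Hk).
  apply sum_eq; intros l Hl.
  destruct (roots_of_unity_sums m k l Hk Hl) as [Hc Hs].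
  rewrite plus_sum, !sum_f_R0_scal_l, Hc, Hs.
  destruct (Nat.eqb_spec k l) as [<-|_]; ring.
Qed.

Lemma partial_sums_growing (f : nat -> R) :
  (forall k, 0 <= f k) -> Un_growing (fun n => sum_f_R0 f n).
Proof. intros Hf n. rewrite tech5. specialize (Hf (S n)). lra. Qed.

Lemma Un_cv_const c : Un_cv (fun _ => c) c.
Proof. intros eps Heps. exists 0%nat. intros n _. rewrite Rdist_eq. lra. Qed.

Lemma Un_cv_pow_0 q : Rabs q < 1 -> Un_cv (fun n => q ^ n) 0.
Proof.
  intros Hq eps Heps. destruct (pow_lt_1_zero q Hq eps Heps) as [N HN].
  exists N. intros n Hn. unfold Rdist. rewrite Rminus_0_r. now apply HN.
Qed.

Lemma Rle_cv_lim_eventually (u v : nat -> R) l1 l2 N :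
  Un_cv u l1 -> Un_cv v l2 -> (forall n, (N <= n)%nat -> u n <= v n) -> l1 <= l2.
Proof.
  intros Hu Hv Huv.
  apply (Rle_cv_lim (Un := fun n => u (n + N)%nat) (Vn := fun n => v (n + N)%nat)).
  - intros n. apply Huv. lia.
  - now apply CV_shift'.
  - now apply CV_shift'.
Qed.

Lemma series_terms_cv_0 (f : nat -> R) l :
  Un_cv (fun n => sum_f_R0 f n) l -> Un_cv f 0.
Proof.
  intros Hf. apply (CV_shift _ 1).
  apply (Un_cv_ext (fun n => sum_f_R0 f (n + 1) - sum_f_R0 f n)).
  - intros n. rewrite Nat.add_1_r, tech5. ring.
  - replace 0 with (l - l) by ring. apply CV_minus; [now apply CV_shift'|exact Hf].
Qed.

Lemma geometric_sum_le q n : 0 <= q < 1 -> sum_f_R0 (fun i => q ^ i) n <= / (1 - q).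
Proof.
  intros Hq. pose proof (GP_finite q n) as E.
  assert (0 <= q ^ (n + 1)) by (apply pow_le; lra).
  apply (Rmult_le_reg_r (1 - q)); [lra|].
  rewrite Rinv_l by lra. lra.
Qed.

Lemma series_tail_geometric (f : nat -> R) l C q K m :
  0 <= q < 1 -> (K <= S m)%nat -> Un_cv (fun n => sum_f_R0 f n) l ->
  (forall k, (K <= k)%nat -> Rabs (f k) <= C * q ^ k) ->
  Rabs (l - sum_f_R0 f m) <= C * q ^ S m / (1 - q).
Proof.
  intros Hq HKm Hl Hf.
  assert (HC : 0 <= C * q ^ S m) by (eapply Rle_trans; [apply Rabs_pos|now apply Hf]).
  assert (Htail : forall n, (S m <= n)%nat ->
            Rabs (sum_f_R0 f n - sum_f_R0 f m) <= C * q ^ S m / (1 - q)).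
  { intros n Hn. rewrite (tech2 f m n) by lia.
    replace (_ + _ - _) with (sum_f_R0 (fun i => f (S m + i)%nat) (n - S m)) by ring.
    eapply Rle_trans; [apply sum_f_R0_triangle|].
    eapply Rle_trans; [apply sum_Rle; intros i _; apply Hf; lia|].
    rewrite (sum_eq _ (fun i => C * q ^ S m * q ^ i)) by (intros; rewrite pow_add; ring).
    rewrite sum_f_R0_scal_l. apply Rmult_le_compat_l; [exact HC|].
    now apply geometric_sum_le. }
  assert (Hcont : continuity_pt (fun x => Rabs (x - sum_f_R0 f m)) l) by reg.
  exact (Rle_cv_lim_eventually _ _ _ _ (S m)
           (continuity_seq _ _ _ Hcont Hl) (Un_cv_const _) Htail).
Qed.

Definition polar (rho t : R) : Cplx := (rho * cos t, rho * sin t).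

Lemma Cpow_polar rho t k : Cpow (polar rho t) k = polar (rho ^ k) (INR k * t).
Proof.
  induction k as [|k IH]; unfold polar in *; simpl Cpow.
  - unfold Defs.C1; simpl. rewrite Rmult_0_l, cos_0, sin_0. f_equal; ring.
  - rewrite IH, S_INR. unfold Cmul, Re, Im; simpl.
    replace ((INR k + 1) * t) with (INR k * t + t) by ring.
    rewrite cos_plus, sin_plus. f_equal; ring.
Qed.

Lemma Cnorm_sq z : Cnorm z ^ 2 = Re z ^ 2 + Im z ^ 2.
Proof. apply pow2_sqrt. nra. Qed.

Lemma Cnorm_polar rho t : 0 <= rho -> Cnorm (polar rho t) = rho.
Proof.
  intros Hrho. unfold Cnorm, polar, Re, Im, fst, snd.
  replace ((rho * cos t) ^ 2 + (rho * sin t) ^ 2) with (rho ^ 2 * ((sin t)² + (cos t)²))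
    by (unfold Rsqr; ring).
  rewrite sin2_cos2, Rmult_1_r. now apply sqrt_pow2.
Qed.

Lemma Cseries_cv_ext (u u' : nat -> Cplx) l :
  (forall k, u k = u' k) -> Cseries_cv u l -> Cseries_cv u' l.
Proof.
  intros E [Hre Him]. split; eapply Un_cv_ext; try eassumption;
    intros n; apply sum_eq; intros k _; now rewrite E.
Qed.

Lemma Rabs_trig_comb_le x y t :
  Rabs (x * cos t - y * sin t) <= Rabs x + Rabs y /\
  Rabs (x * sin t + y * cos t) <= Rabs x + Rabs y.
Proof.
  assert (Hc : Rabs (cos t) <= 1) by (apply Rabs_le; apply COS_bound).
  assert (Hs : Rabs (sin t) <= 1) by (apply Rabs_le; apply SIN_bound).
  pose proof (Rabs_pos x); pose proof (Rabs_pos y).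
  split; eapply Rle_trans; try apply Rabs_triang;
    rewrite ?Rabs_Ropp, !Rabs_mult; nra.
Qed.

Lemma norm_sq_perturb_le x y x' y' S T : 0 <= S -> 0 <= T ->
  x ^ 2 + y ^ 2 <= S ^ 2 -> Rabs (x - x') <= T -> Rabs (y - y') <= T ->
  x' ^ 2 + y' ^ 2 <= (S + 2 * T) ^ 2.
Proof.
  intros HS HT Hxy Hx Hy.
  assert (Ex : Rabs x ^ 2 = x ^ 2) by (rewrite <- !Rsqr_pow2; symmetry; apply Rsqr_abs).
  assert (Ey : Rabs y ^ 2 = y ^ 2) by (rewrite <- !Rsqr_pow2; symmetry; apply Rsqr_abs).
  assert (Ex' : Rabs x' ^ 2 = x' ^ 2) by (rewrite <- !Rsqr_pow2; symmetry; apply Rsqr_abs).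
  assert (Ey' : Rabs y' ^ 2 = y' ^ 2) by (rewrite <- !Rsqr_pow2; symmetry; apply Rsqr_abs).
  assert (Hx' : Rabs x' <= Rabs x + T).
  { replace x' with (x - (x - x')) by ring. eapply Rle_trans; [apply Rabs_triang|].
    rewrite Rabs_Ropp. lra. }
  assert (Hy' : Rabs y' <= Rabs y + T).
  { replace y' with (y - (y - y')) by ring. eapply Rle_trans; [apply Rabs_triang|].
    rewrite Rabs_Ropp. lra. }
  pose proof (Rabs_pos x); pose proof (Rabs_pos y); pose proof (Rabs_pos x'); pose proof (Rabs_pos y').
  assert (Hsum : Rabs x + Rabs y <= 2 * S).
  { assert ((Rabs x + Rabs y) ^ 2 <= (2 * S) ^ 2) by nra. nra. }
  assert (Rabs x' ^ 2 <= (Rabs x + T) ^ 2) by (apply pow_incr; lra).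
  assert (Rabs y' ^ 2 <= (Rabs y + T) ^ 2) by (apply pow_incr; lra).
  nra.
Qed.

Section Coefficient_square_sum.

Variables (a : nat -> Cplx) (rho s A : R).
Hypotheses (rho_pos : 0 < rho) (rho_lt_s : rho < s).
Hypothesis cv_at_s : exists w, Cseries_cv (fun k => Cmul (a k) (Cpow (polar s 0) k)) w.
Hypothesis bounded_on_circle : forall t,
  exists w, Cseries_cv (fun k => Cmul (a k) (Cpow (polar rho t) k)) w /\ Cnorm w <= A.

Let u k := Re (a k) * rho ^ k.
Let v k := Im (a k) * rho ^ k.
Let q := rho / s.

Lemma q_bounds : 0 <= q < 1.
Proof.
  unfold q. split.
  - apply Rlt_le, Rdiv_lt_0_compat; lra.
  - apply Rmult_lt_reg_r with s; [lra|]. field_simplify; lra.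
Qed.

Lemma series_term_polar_re r t k :
  Re (Cmul (a k) (Cpow (polar r t) k)) =
  Re (a k) * r ^ k * cos (INR k * t) - Im (a k) * r ^ k * sin (INR k * t).
Proof.
  rewrite Cpow_polar.
  transitivity (Re (a k) * (r ^ k * cos (INR k * t)) - Im (a k) * (r ^ k * sin (INR k * t)));
    [reflexivity | ring].
Qed.

Lemma series_term_polar_im r t k :
  Im (Cmul (a k) (Cpow (polar r t) k)) =
  Re (a k) * r ^ k * sin (INR k * t) + Im (a k) * r ^ k * cos (INR k * t).
Proof.
  rewrite Cpow_polar.
  transitivity (Re (a k) * (r ^ k * sin (INR k * t)) + Im (a k) * (r ^ k * cos (INR k * t)));
    [reflexivity | ring].
Qed.

Lemma coeff_geometric_decay :
  exists K, forall k, (K <= k)%nat -> Rabs (u k) + Rabs (v k) <= 2 * q ^ k.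
Proof.
  destruct cv_at_s as [w [Hre Him]].
  destruct (series_terms_cv_0 _ _ Hre 1 Rlt_0_1) as [K1 HK1].
  destruct (series_terms_cv_0 _ _ Him 1 Rlt_0_1) as [K2 HK2].
  exists (Nat.max K1 K2). intros k Hk.
  specialize (HK1 k ltac:(lia)). specialize (HK2 k ltac:(lia)).
  rewrite series_term_polar_re, Rmult_0_r, cos_0, sin_0 in HK1.
  rewrite series_term_polar_im, Rmult_0_r, cos_0, sin_0 in HK2.
  unfold Rdist in HK1, HK2.
  replace (_ - _ - 0) with (Re (a k) * s ^ k) in HK1 by ring.
  replace (_ + _ - 0) with (Im (a k) * s ^ k) in HK2 by ring.
  assert (Hrho : rho ^ k = s ^ k * q ^ k)
    by (rewrite <- Rpow_mult_distr; unfold q; f_equal; field; lra).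
  pose proof q_bounds. assert (0 <= q ^ k) by (apply pow_le; lra).
  unfold u, v. rewrite Hrho, <- !Rmult_assoc, !(Rabs_mult _ (q ^ k)), (Rabs_pos_eq (q ^ k)) by lra.
  nra.
Qed.

Let T m := 2 * q ^ S m / (1 - q).

Lemma partial_sums_on_circle :
  exists K, forall m t, (K <= S m)%nat ->
    trig_re u v m t ^ 2 + trig_im u v m t ^ 2 <= (A + 2 * T m) ^ 2.
Proof.
  destruct coeff_geometric_decay as [K HK].
  exists K. intros m t Hm.
  destruct (bounded_on_circle t) as [w [[Hre Him] Hw]].
  pose proof q_bounds as Hq.
  assert (HA : 0 <= A) by (eapply Rle_trans; [apply sqrt_pos | exact Hw]).
  assert (HT : 0 <= T m).
  { unfold T. apply Rmult_le_pos; [|apply Rlt_le, Rinv_0_lt_compat; lra].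
    apply Rmult_le_pos; [lra | apply pow_le; lra]. }
  assert (Hterm : forall k, (K <= k)%nat ->
     Rabs (u k * cos (INR k * t) - v k * sin (INR k * t)) <= 2 * q ^ k /\
     Rabs (u k * sin (INR k * t) + v k * cos (INR k * t)) <= 2 * q ^ k).
  { intros k Hk. specialize (HK k Hk).
    destruct (Rabs_trig_comb_le (u k) (v k) (INR k * t)). split; lra. }
  apply (norm_sq_perturb_le (Re w) (Im w)); auto.
  - rewrite <- Cnorm_sq. apply pow_incr. split; [apply sqrt_pos | exact Hw].
  - apply (series_tail_geometric _ _ 2 q K m Hq Hm); [|intros k Hk; apply Hterm, Hk].
    eapply Un_cv_ext; [|exact Hre]. intros n. apply sum_eq. intros k _.
    rewrite series_term_polar_re. unfold u, v. ring.
  - apply (series_tail_geometric _ _ 2 q K m Hq Hm); [|intros k Hk; apply Hterm, Hk].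
    eapply Un_cv_ext; [|exact Him]. intros n. apply sum_eq. intros k _.
    rewrite series_term_polar_im. unfold u, v. ring.
Qed.

Theorem coeff_sq_sum_le n :
  sum_f_R0 (fun k => Cnorm (a k) ^ 2 * rho ^ (2 * k)) n <= A ^ 2.
Proof.
  destruct partial_sums_on_circle as [K HK].
  pose proof q_bounds as Hq.
  assert (Hparseval : forall m, (K <= S m)%nat ->
            sum_f_R0 (fun k => u k ^ 2 + v k ^ 2) m <= (A + 2 * T m) ^ 2).
  { intros m Hm. apply (Rmult_le_reg_l (INR (S m))); [apply lt_0_INR; lia|].
    rewrite <- discrete_parseval, (Rmult_comm (INR (S m))), <- sum_cte.
    apply sum_Rle. intros j _. now apply HK. }
  assert (Hcv : Un_cv (fun m => (A + 2 * T m) ^ 2) (A ^ 2)).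
  { set (f x := (A + 4 / (1 - q) * x) ^ 2).
    replace (A ^ 2) with (f 0) by (unfold f; ring).
    apply (Un_cv_ext (fun m => f (q ^ (m + 1)))).
    { intros m. unfold f, T. rewrite Nat.add_1_r. field. lra. }
    apply continuity_seq; [unfold f; reg|].
    apply CV_shift', Un_cv_pow_0. rewrite Rabs_pos_eq; lra. }
  rewrite (sum_eq _ (fun k => u k ^ 2 + v k ^ 2))
    by (intros; cbv beta; unfold u, v; rewrite Nat.mul_comm, pow_mult, Cnorm_sq; ring).
  apply (Rle_cv_lim_eventually _ _ _ _ (Nat.max n K) (Un_cv_const _) Hcv).
  intros m Hm. eapply Rle_trans; [|apply Hparseval; lia].
  apply Rge_le, growing_prop; [|lia].
  apply partial_sums_growing. intros k. nra.
Qed.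

End Coefficient_square_sum.

Lemma in_B_deriv_coeff_sq_sum (b : nat -> Cplx) rho n :
  in_B b -> 0 < rho < 1 ->
  sum_f_R0 (fun k => INR (S k) ^ 2 * Cnorm (b (S k)) ^ 2 * rho ^ (2 * k)) n
  <= (1 / (1 - rho ^ 2)) ^ 2.
Proof.
  intros [_ HB] Hrho.
  set (a k := Cscale (INR (S k)) (b (S k))).
  assert (Ha : forall z k, Cmul (a k) (Cpow z k) = Cscale (INR (S k)) (Cmul (b (S k)) (Cpow z k))).
  { intros z k. unfold a, Cmul, Cscale, Re, Im; simpl. f_equal; ring. }
  rewrite (sum_eq _ (fun k => Cnorm (a k) ^ 2 * rho ^ (2 * k)))
    by (intros; cbv beta; unfold a; rewrite !Cnorm_sq; unfold Cscale, Re, Im; simpl; ring).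
  apply (coeff_sq_sum_le a rho ((1 + rho) / 2)); try lra.
  - destruct (HB (polar ((1 + rho) / 2) 0)) as [w [Hw _]]; [rewrite Cnorm_polar; lra|].
    exists w. apply (Cseries_cv_ext _ _ _ (fun k => eq_sym (Ha _ k)) Hw).
  - intros t. destruct (HB (polar rho t)) as [w [Hw Hbound]]; [rewrite Cnorm_polar; lra|].
    exists w. split; [apply (Cseries_cv_ext _ _ _ (fun k => eq_sym (Ha _ k)) Hw)|].
    now rewrite Cnorm_polar in Hbound by lra.
Qed.

Lemma series_nonneg_bounded (f : nat -> R) B :
  (forall k, 0 <= f k) -> (forall n, sum_f_R0 f n <= B) ->
  exists l, infinite_sum f l /\ l <= B.
Proof.
  intros Hf HB.
  destruct (growing_cv (fun n => sum_f_R0 f n)) as [l Hl].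
  - now apply partial_sums_growing.
  - exists B. intros y [n ->]. apply HB.
  - exists l. split; [exact Hl|]. exact (Rle_cv_lim HB Hl (Un_cv_const B)).
Qed.

Lemma weighted_pow_le_third x k : 0 <= x <= / 3 -> (1 <= k)%nat ->
  INR (S k) * x ^ S k <= 3 / 2 * x ^ 2 * (INR (S k) ^ 2 * (/ 3) ^ k).
Proof.
  intros Hx Hk. destruct k as [|m]; [lia|].
  assert (Hm : x ^ m <= (/ 3) ^ m) by (apply pow_incr; lra).
  assert (0 <= x ^ m) by (apply pow_le; lra).
  assert (0 <= (/ 3) ^ m) by (apply pow_le; lra).
  pose proof (pos_INR m).
  replace (INR (S (S m)) * x ^ S (S m)) with (x ^ 2 * ((INR m + 2) * x ^ m))
    by (rewrite !S_INR; simpl; ring).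
  replace (3 / 2 * x ^ 2 * (INR (S (S m)) ^ 2 * (/ 3) ^ S m))
    with (x ^ 2 * ((INR m + 2) ^ 2 / 2 * (/ 3) ^ m)) by (rewrite !S_INR; simpl; field).
  apply Rmult_le_compat_l; [apply pow2_ge_0 | nra].
Qed.

Definition sq_coeff_term (b : nat -> Cplx) (r : R) (k : nat) : R :=
  if (k <? 2)%nat then 0 else INR k * Cnorm (b k) ^ 2 * r ^ (2 * k).

Lemma sq_coeff_term_nonneg b r k : 0 <= sq_coeff_term b r k.
Proof.
  unfold sq_coeff_term. destruct (k <? 2)%nat; [lra|].
  rewrite pow_mult. pose proof (pos_INR k). pose proof (pow2_ge_0 (Cnorm (b k))).
  pose proof (pow_le (r ^ 2) k (pow2_ge_0 r)).
  apply Rmult_le_pos; [apply Rmult_le_pos|]; lra.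
Qed.

Lemma sq_coeff_term_S_le b r k : 0 <= r ^ 2 <= / 3 ->
  sq_coeff_term b r (S k) <= 3 / 2 * r ^ 4 * (INR (S k) ^ 2 * Cnorm (b (S k)) ^ 2 * (/ 3) ^ k).
Proof.
  intros Hx. replace (r ^ 4) with ((r ^ 2) ^ 2) by ring.
  assert (0 <= (/ 3) ^ k) by (apply pow_le; lra).
  pose proof (pow2_ge_0 (Cnorm (b (S k)))). pose proof (pow2_ge_0 (r ^ 2)).
  unfold sq_coeff_term. destruct (Nat.ltb_spec (S k) 2) as [_|Hk].
  - apply Rmult_le_pos; [lra|]. pose proof (pow2_ge_0 (INR (S k))).
    apply Rmult_le_pos; [apply Rmult_le_pos|]; lra.
  - rewrite pow_mult. pose proof (weighted_pow_le_third (r ^ 2) k Hx ltac:(lia)). nra.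
Qed.

Lemma inv_sqrt3_sq : (1 / sqrt 3) ^ 2 = / 3.
Proof. unfold Rdiv. rewrite Rmult_1_l, pow_inv, pow2_sqrt; lra. Qed.

Lemma sq_coeff_term_sum_le b r n : in_B b -> 0 <= r <= 1 / sqrt 3 ->
  sum_f_R0 (sq_coeff_term b r) n <= 27 / 8 * r ^ 4.
Proof.
  intros HB Hr.
  assert (Hrho : 0 < 1 / sqrt 3 < 1).
  { pose proof inv_sqrt3_sq. assert (0 < 1 / sqrt 3) by (apply Rdiv_lt_0_compat, sqrt_lt_R0; lra).
    split; nra. }
  assert (Hx : 0 <= r ^ 2 <= / 3)
    by (rewrite <- inv_sqrt3_sq; split; [apply pow2_ge_0 | apply pow_incr; lra]).
  pose proof (in_B_deriv_coeff_sq_sum b (1 / sqrt 3) n HB Hrho) as Hcoef.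
  rewrite (sum_eq _ (fun k => INR (S k) ^ 2 * Cnorm (b (S k)) ^ 2 * (/ 3) ^ k)), inv_sqrt3_sq in Hcoef
    by (intros; cbv beta; now rewrite pow_mult, inv_sqrt3_sq).
  apply Rle_trans with (sum_f_R0 (sq_coeff_term b r) (S n)).
  { apply Rge_le, growing_prop; [apply partial_sums_growing, sq_coeff_term_nonneg | lia]. }
  rewrite decomp_sum by lia. simpl pred.
  replace (sq_coeff_term b r 0) with 0 by reflexivity.
  eapply Rle_trans; [apply Rplus_le_compat_l, sum_Rle; intros k _; now apply sq_coeff_term_S_le|].
  rewrite sum_f_R0_scal_l. pose proof (pow2_ge_0 (r ^ 2)).
  replace (r ^ 4) with ((r ^ 2) ^ 2) by ring. nra.
Qed.

Theorem corollary2 (b : nat -> Cplx) (r : R) :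
  in_B b -> 0 <= r <= 1 / sqrt 3 ->
  exists l : R,
    infinite_sum
      (fun k => if (k <? 2)%nat then 0 else INR k * Cnorm (b k) ^ 2 * r ^ (2 * k)) l /\
    l <= 27 / 8 * r ^ 4.
Proof.
  intros HB Hr.
  apply (series_nonneg_bounded (sq_coeff_term b r)).
  - apply sq_coeff_term_nonneg.
  - intros n. now apply sq_coeff_term_sum_le.
Qed.
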